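(* Each of the following graphs is geodesic-transitive: the Hamming graph $H(k,m)$ ($m\ge2$), the halved $k$-cube $\tfrac12 H(k,2)$, the folded $k$-cube $\bar H(k,2)$, and (for $k$ even) the halved folded $k$-cube $\tfrac12\bar H(k,2)$.
   Context: $H(k,m)$ has vertex set $\{0,1,\dots,m-1\}^k$, two $k$-tuples adjacent iff they differ in exactly one coordinate; $H(k,2)$ is the $k$-cube. The halved $k$-cube is the graph induced by the distance-$2$ graph of $H(k,2)$ on one of its two bipartition classes. The folded $k$-cube is obtained by identifying each vertex $x$ of $H(k,2)$ with its complement $x+(1,\dots,1)$, two classes adjacent iff they contain adjacent vertices. For $k$ even the folded $k$-cube is bipartite and the halved folded $k$-cube is the graph induced by its distance-$2$ graph on one bipartition class. A geodesic of length $\ell$ is a vertex sequence $(v_0,\dots,v_\ell)$ with consecutive vertices adjacent and $d(v_0,v_\ell)=\ell$; a graph is geodesic-transitive if its automorphism group is transitive on geodesics of each length. *)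

From mathcomp Require Import all_boot all_fingroup.
Set Implicit Arguments. Unset Strict Implicit. Unset Printing Implicit Defensive.

Definition walk_len (T : finType) (e : rel T) (x y : T) (n : nat) : bool :=
  [exists p : n.-tuple T, path e x p && (last x p == y)].

Definition dist_eq (T : finType) (e : rel T) (x y : T) (n : nat) : bool :=
  walk_len e x y n && [forall m : 'I_n, ~~ walk_len e x y m].

Definition geodesic (T : finType) (e : rel T) (x : T) (p : seq T) (l : nat) : Prop :=
  [/\ path e x p, size p = l & dist_eq e x (last x p) l].

Definition is_aut (T : finType) (e : rel T) (g : {perm T}) : Prop :=
  forall u v, e (g u) (g v) = e u v.

Definition geodesic_transitive (T : finType) (e : rel T) : Prop :=
  forall (l : nat) (x y : T) (p q : seq T),
    geodesic e x p l -> geodesic e y q l ->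
    exists g : {perm T}, [/\ is_aut e g, g x = y & map g p = q].

Definition hamming_adj (k m : nat) : rel {ffun 'I_k -> 'I_m} :=
  fun x y => #|[set i | x i != y i]| == 1.

Definition cube (k : nat) := {ffun 'I_k -> bool}.
Definition cube_adj (k : nat) : rel (cube k) :=
  fun x y => #|[set i | x i != y i]| == 1.
Definition weight (k : nat) (x : cube k) : nat := #|[set i | x i]|.

Definition even_cube (k : nat) := {x : cube k | ~~ odd (weight x)}.
Definition halved_cube_adj (k : nat) : rel (even_cube k) :=
  fun x y => dist_eq (@cube_adj k) (val x) (val y) 2.

Definition cube_compl (k : nat) (x : cube k) : cube k := [ffun i => ~~ x i].

(* folded k-cube: vertices are the classes {x, x + (1,...,1)}, two classes
   adjacent iff they contain adjacent vertices. *)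
Definition folded_vtx (k : nat) :=
  {A : {set cube k} | [exists x : cube k, A == [set x; cube_compl x]]}.
Definition folded_adj (k : nat) : rel (folded_vtx k) :=
  fun A B => [exists u in val A, exists v in val B, cube_adj u v].

Definition even_folded (k : nat) :=
  {A : folded_vtx k | [exists x in val A, ~~ odd (weight x)]}.
Definition halved_folded_adj (k : nat) : rel (even_folded k) :=
  fun A B => dist_eq (@folded_adj k) (val A) (val B) 2.

(* Each graph comes with an explicit distance d (Hamming distance, its minimum with the
   distance to the complement, or half of either) and a reference geodesic
   c_0, c_1, c_2, ..., where c_n has its first n coordinates changed.  Geodesic
   transitivity then follows by induction on the length once the automorphism group is
   vertex-transitive and the pointwise stabiliser of c_0, ..., c_l is transitive on the
   neighbours of c_l at distance l+1 from c_0.  For the Hamming graph the stabiliser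
   elements needed are monomial maps (a transposition of two coordinates followed by a
   symbol swap in one coordinate); on the cube these commute with complementation, so
   they descend to the folded cube.  A halved graph inherits both properties from its
   parent two steps at a time, since on one bipartition class the parent distance is
   even and the halved distance is half of it. *)

From mathcomp Require Import all_boot all_fingroup zify.
Set Implicit Arguments. Unset Strict Implicit. Unset Printing Implicit Defensive.

Section Automorphisms.
Variables (T : finType) (e : rel T).

Lemma walk_lenP x y n :
  reflect (exists p : seq T, [/\ size p = n, path e x p & last x p = y]) (walk_len e x y n).
Proof.
apply: (iffP existsP) => [[p /andP[ep /eqP lp]] | [p [sp ep lp]]].
  by exists (val p); rewrite size_tuple.
have sp' : size p == n by rewrite sp.
by exists (Tuple sp'); rewrite /= ep lp eqxx.
Qed.

Lemma is_autV (g : {perm T}) : is_aut e g -> is_aut e g^-1%g.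
Proof. by move=> ag u v; rewrite -ag !permKV. Qed.

Lemma is_autM (g h : {perm T}) : is_aut e g -> is_aut e h -> is_aut e (g * h)%g.
Proof. by move=> ag ah u v; rewrite !permM ah ag. Qed.

Lemma map_permM (g h : {perm T}) p : map (g * h)%g p = map h (map g p).
Proof. by rewrite -map_comp; apply: eq_map => x; rewrite permM. Qed.

Lemma map_permK (g : {perm T}) p : map g^-1%g (map g p) = p.
Proof. by rewrite -map_comp -[RHS]map_id; apply: eq_map => x; rewrite /= permK. Qed.

Lemma aut_path (g : {perm T}) x p : is_aut e g -> path e (g x) (map g p) = path e x p.
Proof. by move=> ag; elim: p x => //= y p IHp x; rewrite ag IHp. Qed.

Lemma walk_len_aut (g : {perm T}) x y n :
  is_aut e g -> walk_len e (g x) (g y) n = walk_len e x y n.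
Proof.
suff walk_map h u v : is_aut e h -> walk_len e u v n -> walk_len e (h u) (h v) n.
  move=> ag; apply/idP/idP; last exact: walk_map.
  by move/(walk_map _ _ _ (is_autV ag)); rewrite !permK.
move=> ah /walk_lenP[p [sp ep lp]]; apply/walk_lenP; exists (map h p).
by rewrite size_map aut_path // last_map lp.
Qed.

Lemma dist_eq_aut (g : {perm T}) x y n :
  is_aut e g -> dist_eq e (g x) (g y) n = dist_eq e x y n.
Proof.
move=> ag; rewrite /dist_eq walk_len_aut //; congr (_ && _).
by apply: eq_forallb => m; rewrite walk_len_aut.
Qed.

End Automorphisms.

Definition graph_metric (T : finType) (e : rel T) (d : T -> T -> nat) : Prop :=
  forall x y n, dist_eq e x y n = (d x y == n).

Section GraphMetric.
Variables (T : finType) (e : rel T) (d : T -> T -> nat).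

Lemma graph_metric_descent :
  (forall x, d x x = 0) -> (forall x y, d x y = 0 -> x = y) ->
  (forall x y z, e y z -> d x z <= (d x y).+1) ->
  (forall x y, 0 < d x y -> exists2 z, e x z & d z y < d x y) ->
  graph_metric e d.
Proof.
move=> d_refl d_eq0 d_step d_descent.
have le_walk x y n : walk_len e x y n -> d x y <= n.
  case/walk_lenP=> p [<- ep <-]; elim/last_ind: p ep => [|p z IHp] /=.
    by rewrite d_refl.
  rewrite rcons_path last_rcons size_rcons => /andP[/IHp le_p /(d_step x) le_z].
  exact: leq_trans le_z _.
have walk x y : walk_len e x y (d x y).
  have [n] := ubnP (d x y); elim: n x => // n IHn x /ltnSE lt_n.
  have [d0|d_gt0] := posnP (d x y).
    by rewrite d0 (d_eq0 _ _ d0); apply/walk_lenP; exists [::].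
  have [z exz lt_z] := d_descent x y d_gt0.
  have /walk_lenP[p [sp ep lp]] := IHn z (leq_trans lt_z lt_n).
  have w : walk_len e x y (d z y).+1.
    by apply/walk_lenP; exists (z :: p); rewrite /= sp exz ep lp.
  suff -> : d x y = (d z y).+1 by [].
  by apply/eqP; rewrite eqn_leq lt_z (le_walk _ _ _ w).
move=> x y n; apply/idP/eqP => [/andP[/le_walk le_n /forallP no_walk] | <-].
  apply/eqP; rewrite eqn_leq le_n leqNgt; apply/negP => lt_n.
  by have := no_walk (Ordinal lt_n); rewrite walk.
rewrite /dist_eq walk; apply/forallP => m; apply/negP => /le_walk.
by rewrite leqNgt ltn_ord.
Qed.

Hypothesis d_metric : graph_metric e d.

Lemma metric_walk x y : walk_len e x y (d x y).
Proof. by have := eqxx (d x y); rewrite -d_metric => /andP[]. Qed.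

Lemma metric_le_walk x y n : walk_len e x y n -> d x y <= n.
Proof.
move=> w; rewrite leqNgt; apply/negP => lt_n.
have := eqxx (d x y); rewrite -d_metric => /andP[_ /forallP/(_ (Ordinal lt_n))].
by rewrite w.
Qed.

Lemma metric_refl x : d x x = 0.
Proof. by apply/eqP; rewrite -leqn0; apply: metric_le_walk; apply/walk_lenP; exists [::]. Qed.

Lemma metric_eq0 x y : d x y = 0 -> x = y.
Proof. by move=> d0; have := metric_walk x y; rewrite d0 => /walk_lenP[p [/size0nil -> _ <-]]. Qed.

Lemma metric_adj x y : e x y -> d x y <= 1.
Proof. by move=> exy; apply: metric_le_walk; apply/walk_lenP; exists [:: y]; rewrite /= exy. Qed.

Lemma metric1_adj x y : d x y = 1 -> e x y.
Proof.
move=> d1; have := metric_walk x y; rewrite d1 => /walk_lenP[p [sp ep <-]].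
by case: p sp ep => [|z []] //= _; rewrite andbT.
Qed.

Lemma metric_triangle x y z : d x z <= d x y + d y z.
Proof.
have /walk_lenP[p [sp ep lp]] := metric_walk x y.
have /walk_lenP[q [sq eq lq]] := metric_walk y z.
apply: metric_le_walk; apply/walk_lenP; exists (p ++ q).
by rewrite size_cat cat_path last_cat sp sq ep lp eq lq.
Qed.

Lemma metric_step x y z : e y z -> d x z <= (d x y).+1.
Proof.
by move=> /metric_adj le1; rewrite -addn1 (leq_trans (metric_triangle x y z)) ?leq_add2l.
Qed.

Lemma metric_aut (g : {perm T}) x y : is_aut e g -> d (g x) (g y) = d x y.
Proof. by move=> ag; apply/eqP; rewrite -d_metric dist_eq_aut // d_metric. Qed.

Lemma metric_between x y n : n <= d x y -> exists z, d x z = n /\ d z y = d x y - n.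
Proof.
move=> le_n; have /walk_lenP[p [sp ep lp]] := metric_walk x y.
exists (last x (take n p)).
move: ep; rewrite -[p in path _ _ p](cat_take_drop n p) cat_path => /andP[ep1 ep2].
have le1 : d x (last x (take n p)) <= n.
  by apply: metric_le_walk; apply/walk_lenP; exists (take n p); rewrite size_takel ?sp.
have le2 : d (last x (take n p)) y <= d x y - n.
  apply: metric_le_walk; apply/walk_lenP; exists (drop n p).
  by rewrite size_drop sp -last_cat cat_take_drop lp.
have := metric_triangle x (last x (take n p)) y; lia.
Qed.

Definition outward x : rel T := [rel u v | e u v && (d x v == (d x u).+1)].

Lemma outward_path x u p : path (outward x) u p -> d x (last u p) = d x u + size p.
Proof.
elim: p u => [|v p IHp] u /=; first by rewrite addn0.
by case/andP=> /andP[_ /eqP dv] /IHp ->; rewrite dv addSnnS.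
Qed.

Lemma path_outward x u p :
  path e u p -> d x (last u p) = d x u + size p -> path (outward x) u p.
Proof.
elim: p u => [|v p IHp] u //= /andP[euv ep] d_last.
have le_last : d x (last v p) <= d x v + size p.
  apply: leq_trans (metric_triangle x v _) _; rewrite leq_add2l.
  by apply: metric_le_walk; apply/walk_lenP; exists p.
have := metric_step x euv => le_v.
have dv : d x v = (d x u).+1 by lia.
apply/andP; split; first by rewrite /outward /= euv dv eqxx.
by apply: IHp => //; rewrite dv d_last addSnnS.
Qed.

Lemma geodesicP x p l : geodesic e x p l <-> size p = l /\ path (outward x) x p.
Proof.
split=> [[ep sp] | [sp op]].
  by rewrite d_metric => /eqP dl; split=> //; apply: path_outward; rewrite // metric_refl sp.
split=> //; first by apply: sub_path op => u v /andP[].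
by rewrite d_metric outward_path // metric_refl sp.
Qed.

End GraphMetric.

Definition canonical_geodesics (T : finType) (e : rel T) (c : nat -> T) : Prop :=
  (forall x, exists2 g : {perm T}, is_aut e g & g x = c 0) /\
  (forall l a, dist_eq e (c 0) (c l) l -> e (c l) a -> dist_eq e (c 0) a l.+1 ->
     exists2 h : {perm T}, is_aut e h & (forall i, i <= l -> h (c i) = c i) /\ h a = c l.+1).

Section CanonicalGeodesics.
Variables (T : finType) (e : rel T) (d : T -> T -> nat) (c : nat -> T).
Hypotheses (d_metric : graph_metric e d) (c_canonical : canonical_geodesics e c).

Lemma last_canonical l : last (c 0) (mkseq (c \o succn) l) = c l.
Proof. by case: l => // l; rewrite mkseqS last_rcons. Qed.

Lemma canonical_reduction l x p : size p = l -> path (outward e d x) x p ->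
  exists2 g : {perm T}, is_aut e g & g x = c 0 /\ map g p = mkseq (c \o succn) l.
Proof.
have [c_trans c_ext] := c_canonical.
elim/last_ind: p l => [|p a IHp] l.
  by move=> <- _; have [g ag gx] := c_trans x; exists g.
rewrite size_rcons rcons_path => <- /andP[op /andP[ea /eqP da]].
have [g ag [gx gp]] := IHp _ erefl op.
have g_last : g (last x p) = c (size p) by rewrite -last_map gx gp last_canonical.
have d_last : d x (last x p) = size p by rewrite (outward_path op) (metric_refl d_metric).
have [h ah [h_fix ha]] : exists2 h : {perm T}, is_aut e h &
    (forall i, i <= size p -> h (c i) = c i) /\ h (g a) = c (size p).+1.
  apply: c_ext.
  - by rewrite d_metric -gx -g_last (metric_aut d_metric) // d_last.
  - by rewrite -g_last ag.
  - by rewrite d_metric -gx (metric_aut d_metric) // da d_last.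
exists (g * h)%g; first exact: is_autM.
split; first by rewrite permM gx h_fix.
rewrite map_permM map_rcons gp map_rcons mkseqS ha; congr rcons.
rewrite /mkseq -map_comp; apply/eq_in_map => i; rewrite mem_iota => /andP[_ lt_i].
exact: h_fix.
Qed.

Lemma canonical_extension2 n a : d (c 0) (c n) = n -> d (c n) a = 2 -> d (c 0) a = n.+2 ->
  exists2 h : {perm T}, is_aut e h & (forall i, i <= n -> h (c i) = c i) /\ h a = c n.+2.
Proof.
have [_ c_ext] := c_canonical.
move=> dn dna da; have /(metric_between d_metric) [m [dnm dma]] : 1 <= d (c n) a by rewrite dna.
rewrite dna in dma.
have dm : d (c 0) m = n.+1.
  have := metric_triangle d_metric (c 0) (c n) m.
  have := metric_triangle d_metric (c 0) m a; lia.
have [h1 ah1 [h1_fix h1m]] : exists2 h1 : {perm T}, is_aut e h1 &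
    (forall i, i <= n -> h1 (c i) = c i) /\ h1 m = c n.+1.
  apply: c_ext; rewrite ?d_metric ?dn ?dm //; exact: (metric1_adj d_metric).
have h1c0 : h1 (c 0) = c 0 by exact: h1_fix.
have [h2 ah2 [h2_fix h2a]] : exists2 h2 : {perm T}, is_aut e h2 &
    (forall i, i <= n.+1 -> h2 (c i) = c i) /\ h2 (h1 a) = c n.+2.
  apply: c_ext.
  - by rewrite d_metric -h1c0 -h1m (metric_aut d_metric) // dm.
  - by rewrite -h1m ah1; exact: (metric1_adj d_metric).
  - by rewrite d_metric -h1c0 (metric_aut d_metric) // da.
exists (h1 * h2)%g; first exact: is_autM.
by split=> [i le_i|]; rewrite permM ?h1_fix ?h2_fix // ltnW.
Qed.

Theorem geodesic_transitive_canonical : geodesic_transitive e.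
Proof.
move=> l x y p q /(geodesicP d_metric)[sp op] /(geodesicP d_metric)[sq oq].
have [g ag [gx gp]] := canonical_reduction sp op.
have [h ah [hy hq]] := canonical_reduction sq oq.
exists (g * h^-1)%g; split.
- exact: is_autM (is_autV ah).
- by rewrite permM gx -hy permK.
- by rewrite map_permM gp -hq map_permK.
Qed.

End CanonicalGeodesics.

Definition halved_adj (T : finType) (e : rel T) (P : pred T) : rel {x | P x} :=
  fun x y => dist_eq e (val x) (val y) 2.
Arguments halved_adj {T} e P.

Section Halving.
Variables (T : finType) (e : rel T) (d : T -> T -> nat) (P : pred T).
Hypothesis d_metric : graph_metric e d.
Hypothesis P_parity : forall x y, P x -> P y = ~~ odd (d x y).

Definition halved_dist (x y : {x | P x}) := d (val x) (val y) %/ 2.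

Lemma halved_distK x y : d (val x) (val y) = halved_dist x y * 2.
Proof. by rewrite divnK // dvdn2 -P_parity ?valP. Qed.

Lemma halved_metric : graph_metric (halved_adj e P) halved_dist.
Proof.
apply: graph_metric_descent => [x | x y | x y z | x y].
- by rewrite /halved_dist (metric_refl d_metric).
- move=> d0; apply/val_inj/(metric_eq0 d_metric).
  by rewrite halved_distK d0.
- rewrite /halved_adj d_metric => /eqP dyz; rewrite /halved_dist.
  have := metric_triangle d_metric (val x) (val y) (val z); rewrite dyz.
  by move: (d _ (val z)) (d _ (val y)) => a b; lia.
- move=> d_gt0; have /(metric_between d_metric) [z [dxz dzy]] : 2 <= d (val x) (val y).
    by rewrite halved_distK; move: (halved_dist x y) d_gt0 => n; lia.
  have Pz : P z by rewrite (P_parity _ (valP x)) dxz.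
  exists (exist _ z Pz); first by rewrite /halved_adj d_metric dxz.
  have -> : halved_dist (exist _ z Pz) y = (d (val x) (val y) - 2) %/ 2 by rewrite -dzy.
  by rewrite halved_distK; move: (halved_dist x y) d_gt0 => n; lia.
Qed.

Lemma aut_class_stable (g : {perm T}) x : is_aut e g -> P x -> P (g x) -> forall y, P (g y) = P y.
Proof. by move=> ag Px Pgx y; rewrite (P_parity _ Pgx) (P_parity _ Px) (metric_aut d_metric). Qed.

Section HalvedPerm.
Variables (g : {perm T}) (gP : forall y, P (g y) = P y).

Definition halved_fun (u : {x | P x}) : {x | P x} := exist _ (g (val u)) (etrans (gP _) (valP u)).

Lemma halved_fun_inj : injective halved_fun.
Proof. by move=> u v /(congr1 val) /perm_inj /val_inj. Qed.

Definition halved_perm : {perm {x | P x}} := perm halved_fun_inj.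

Lemma halved_permE u : val (halved_perm u) = g (val u).
Proof. by rewrite permE. Qed.

Lemma halved_perm_aut : is_aut e g -> is_aut (halved_adj e P) halved_perm.
Proof. by move=> ag u v; rewrite /halved_adj !halved_permE dist_eq_aut. Qed.

End HalvedPerm.

Variables (c : nat -> T).
Hypotheses (c_canonical : canonical_geodesics e c) (P_c0 : P (c 0)).

(* [insubd] falls back to [c 0] when [c i.*2] is outside the class, which can only
   happen once [i.*2] exceeds the diameter. *)
Definition halved_canon (i : nat) : {x | P x} := insubd (exist _ (c 0) P_c0) (c i.*2).

Lemma halved_canonE i : val (halved_canon i) = if P (c i.*2) then c i.*2 else c 0.
Proof. exact: val_insubd. Qed.

Lemma halved_canon_dist l : halved_dist (halved_canon 0) (halved_canon l) = l ->
  val (halved_canon l) = c l.*2 /\ d (c 0) (c l.*2) = l.*2.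
Proof.
rewrite /halved_dist !halved_canonE P_c0; case: ifP => [Pc | _]; last first.
  by rewrite (metric_refl d_metric) => <-; rewrite (metric_refl d_metric).
have := P_parity (c l.*2) P_c0; rewrite Pc => /esym even_d.
by move=> dl; split=> //; rewrite -[LHS](@divnK 2) ?dl ?muln2 // dvdn2 even_d.
Qed.

Lemma halved_canonical : canonical_geodesics (halved_adj e P) halved_canon.
Proof.
have [c_trans _] := c_canonical.
have canon0 : val (halved_canon 0) = c 0 by rewrite halved_canonE P_c0.
split=> [x | l a].
  have [g ag gx] := c_trans (val x).
  have gP : forall y, P (g y) = P y by apply: aut_class_stable ag (valP x) _; rewrite gx.
  exists (halved_perm gP); first exact: halved_perm_aut.
  by apply: val_inj; rewrite halved_permE canon0.
rewrite !halved_metric /halved_adj d_metric => /eqP /halved_canon_dist [-> dl] /eqP dla /eqP da.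
have [h ah [h_fix ha]] : exists2 h : {perm T}, is_aut e h &
    (forall i, i <= l.*2 -> h (c i) = c i) /\ h (val a) = c (l.+1).*2.
  rewrite doubleS; apply: (canonical_extension2 d_metric c_canonical dl dla).
  by rewrite -canon0 halved_distK da muln2.
have hP : forall y, P (h y) = P y by apply: aut_class_stable ah P_c0 _; rewrite h_fix.
exists (halved_perm hP); first exact: halved_perm_aut.
split=> [i le_i|]; apply: val_inj; rewrite halved_permE.
  by rewrite halved_canonE; case: ifP => _; apply: h_fix; rewrite ?leq_double.
by rewrite ha halved_canonE -ha hP (valP a) ha.
Qed.

End Halving.

Theorem halved_geodesic_transitive (T : finType) (e : rel T) (d : T -> T -> nat)
    (P : pred T) (c : nat -> T) :
  graph_metric e d -> canonical_geodesics e c ->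
  (forall x y, P x -> P y = ~~ odd (d x y)) -> P (c 0) ->
  geodesic_transitive (halved_adj e P).
Proof.
move=> d_metric c_canonical P_parity P_c0.
exact: geodesic_transitive_canonical (halved_metric d_metric P_parity)
                                     (halved_canonical d_metric P_parity c_canonical P_c0).
Qed.

Lemma card_ord_ltn k n : #|[set i : 'I_k | i < n]| = minn n k.
Proof.
have le_nk := geq_minr n k.
have -> : [set i : 'I_k | i < n] = widen_ord le_nk @: [set: 'I_(minn n k)].
  apply/setP => i; rewrite inE; apply/idP/imsetP => [lt_in | [j _ ->]].
    have lt_i : i < minn n k by rewrite leq_min lt_in ltn_ord.
    by exists (Ordinal lt_i); last apply: val_inj.
  exact: leq_trans (ltn_ord j) (geq_minl n k).
rewrite card_imset ?cardsT ?card_ord // => i j /(congr1 val) /= ij.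
exact: val_inj.
Qed.

Section Hamming.
Variables (k : nat) (A : finType).
Notation word := {ffun 'I_k -> A}.

Definition hamming (x y : word) : nat := #|[set i | x i != y i]|.
Definition hamming_rel : rel word := fun x y => hamming x y == 1.

Lemma hamming_sym x y : hamming x y = hamming y x.
Proof. by apply: eq_card => i; rewrite !inE eq_sym. Qed.

Lemma hamming_refl x : hamming x x = 0.
Proof. by apply/eqP; rewrite cards_eq0; apply/eqP/setP => i; rewrite !inE eqxx. Qed.

Lemma hamming_eq0 x y : hamming x y = 0 -> x = y.
Proof.
move/eqP; rewrite cards_eq0 => /eqP xy; apply/ffunP => i.
by apply/eqP; have /setP/(_ i) := xy; rewrite !inE => /negbFE.
Qed.

Lemma hamming_le x y : hamming x y <= k.
Proof. by rewrite -[k]card_ord max_card. Qed.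

Lemma hamming_triangle x y z : hamming x z <= hamming x y + hamming y z.
Proof.
rewrite /hamming; apply: leq_trans (leq_card_setU _ _).
by apply/subset_leq_card/subsetP => i; rewrite !inE; case: (x i =P y i) => [->|] //=.
Qed.

Lemma hamming_metric : graph_metric hamming_rel hamming.
Proof.
apply: graph_metric_descent => [|x y|x y z|x y]; rewrite /hamming_rel.
- exact: hamming_refl.
- exact: hamming_eq0.
- by move=> /eqP dyz; rewrite -addn1 -dyz hamming_triangle.
- rewrite /hamming card_gt0 => /set0Pn[i]; rewrite inE => xy_i.
  exists [ffun j => if j == i then y j else x j].
    apply/cards1P; exists i; apply/setP => j; rewrite !inE ffunE.
    by case: (j =P i) => [->|]; rewrite ?xy_i ?eqxx.
  rewrite [X in _ < X](cardsD1 i) inE xy_i add1n ltnS subset_leq_card //.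
  apply/subsetP => j; rewrite !inE ffunE.
  by case: (j =P i) => [->|]; rewrite ?eqxx.
Qed.


Definition monomial_fun (s : {perm 'I_k}) (t : 'I_k -> {perm A}) (u : word) : word :=
  [ffun j => t j (u (s j))].

Lemma monomial_fun_inj s t : injective (monomial_fun s t).
Proof.
move=> u v /ffunP uv; apply/ffunP => i.
by have := uv (s^-1 i)%g; rewrite !ffunE permKV => /perm_inj.
Qed.

Definition monomial s t : {perm word} := perm (@monomial_fun_inj s t).

Lemma monomialE s t u j : monomial s t u j = t j (u (s j)).
Proof. by rewrite permE ffunE. Qed.

Lemma hamming_monomial s t u v : hamming (monomial s t u) (monomial s t v) = hamming u v.
Proof.
rewrite /hamming -(card_preimset [set i | u i != v i] (@perm_inj _ s)).
by apply: eq_card => j; rewrite !inE !monomialE (inj_eq perm_inj).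
Qed.

Lemma monomial_aut s t : is_aut hamming_rel (monomial s t).
Proof. by move=> u v; rewrite /hamming_rel hamming_monomial. Qed.

Variables (a0 a1 : A).
Hypothesis a01 : a0 != a1.

Definition hamming_canon (n : nat) : word := [ffun j : 'I_k => if j < n then a1 else a0].

Lemma hamming_canon_dist n : hamming (hamming_canon 0) (hamming_canon n) = minn n k.
Proof.
rewrite -card_ord_ltn; apply: eq_card => j; rewrite !inE !ffunE ltn0.
by case: (j < n); rewrite ?eqxx ?a01.
Qed.

Lemma monomial_to_canon0 x : exists t, monomial 1 t x = hamming_canon 0.
Proof.
exists (fun j => tperm (x j) a0).
by apply/ffunP => j; rewrite monomialE perm1 !ffunE tpermL ltn0.
Qed.

Lemma hamming_canon_neighbour n w :
  hamming (hamming_canon n) w = 1 -> n < hamming (hamming_canon 0) w ->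
  exists2 j : 'I_k, n <= j & w j != a0 /\ forall i, i != j -> w i = hamming_canon n i.
Proof.
move=> /eqP/cards1P[j /setP Sj] lt_n.
have w_off i : i != j -> w i = hamming_canon n i.
  by move=> ij; have := Sj i; rewrite !inE (negbTE ij) => /negbFE/eqP.
have le_nj : n <= j.
  rewrite leqNgt; apply/negP => lt_jn; move: lt_n; apply/negP; rewrite -leqNgt.
  apply: leq_trans (geq_minl n k); rewrite -hamming_canon_dist.
  apply/subset_leq_card/subsetP => i.
  rewrite !inE; case: (i =P j) => [-> _|/eqP ij]; last by rewrite w_off.
  by rewrite !ffunE lt_jn ltn0.
exists j => //; split=> //.
by have := Sj j; rewrite !inE eqxx ffunE ltnNge le_nj eq_sym.
Qed.

Lemma hamming_extension n w :
  hamming (hamming_canon n) w = 1 -> n < hamming (hamming_canon 0) w ->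
  exists s t, (forall i, i <= n -> monomial s t (hamming_canon i) = hamming_canon i) /\
              monomial s t w = hamming_canon n.+1.
Proof.
move=> /hamming_canon_neighbour/[apply] -[j le_nj [wj w_off]].
set n' : 'I_k := Ordinal (leq_ltn_trans le_nj (ltn_ord j)).
have n'_ge i : i <= n -> (n' < i) = false by move=> le_in; rewrite ltnNge (leq_trans le_in).
exists (tperm j n'), (fun i => if i == n' then tperm (w j) a1 else 1%g); split.
  move=> i le_in; apply/ffunP => m; rewrite monomialE !ffunE.
  have -> : (tperm j n' m < i) = (m < i).
    by case: tpermP => [->|->|//]; rewrite n'_ge // ltnNge (leq_trans le_in).
  case: (m =P n') => [->|_]; last by rewrite perm1.
  by rewrite n'_ge // tpermD // eq_sym.
apply/ffunP => m; rewrite monomialE !ffunE.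
case: (m =P n') => [->|/eqP mn']; first by rewrite tpermR tpermL ltnSn.
have mn : (m == n :> nat) = false by apply: contraNF mn' => /eqP mn; apply/eqP/val_inj.
rewrite perm1 ltnS leq_eqVlt mn /=.
case: tpermP => [mj | mn'_eq | /eqP mj _];
  [| by rewrite mn'_eq eqxx in mn' | by rewrite w_off // ffunE].
rewrite w_off; last by rewrite eq_sym -mj.
by rewrite !ffunE ltnn mj ltnNge le_nj.
Qed.

Lemma hamming_canonical : canonical_geodesics hamming_rel hamming_canon.
Proof.
split=> [x | l a _ /eqP dla].
  by have [t tx] := monomial_to_canon0 x; exists (monomial 1 t); first exact: monomial_aut.
rewrite hamming_metric => /eqP da.
have lt_l : l < hamming (hamming_canon 0) a by rewrite da.
have [s [t [st_fix st_a]]] := hamming_extension dla lt_l.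
by exists (monomial s t); first exact: monomial_aut.
Qed.

End Hamming.

Lemma perm_bool_negb (t : {perm bool}) b : t (~~ b) = ~~ t b.
Proof.
have : t true != t false by rewrite (inj_eq perm_inj).
by case: b; case: (t true); case: (t false).
Qed.

Section Cube.
Variable k : nat.
Notation compl := (@cube_compl k).
Notation canon := (hamming_canon k false true).

Lemma cube_complK : involutive compl.
Proof. by move=> x; apply/ffunP => i; rewrite !ffunE negbK. Qed.

Lemma hamming_compl (x y : cube k) : hamming (compl x) y = k - hamming x y.
Proof.
rewrite /hamming; have <- : ~: [set i | x i != y i] = [set i | compl x i != y i].
  by apply/setP => i; rewrite !inE ffunE; case: (x i); case: (y i).
by rewrite cardsCs setCK card_ord.
Qed.

Lemma hamming_complr (x y : cube k) : hamming x (compl y) = k - hamming x y.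
Proof. by rewrite hamming_sym hamming_compl hamming_sym. Qed.

Lemma hamming_compl2 (x y : cube k) : hamming (compl x) (compl y) = hamming x y.
Proof. by rewrite hamming_compl hamming_complr subKn ?hamming_le. Qed.

Lemma monomial_compl s t (u : cube k) : monomial s t (compl u) = compl (monomial s t u).
Proof. by apply/ffunP => j; rewrite !(monomialE, ffunE) perm_bool_negb. Qed.

Lemma weight_hamming (x : cube k) : weight x = hamming (canon 0) x.
Proof. by apply: eq_card => i; rewrite !inE ffunE ltn0; case: (x i). Qed.

Lemma hamming_parity (x y : cube k) : odd (hamming x y) = odd (weight x) (+) odd (weight y).
Proof.
rewrite /hamming; set X := [set i | x i]; set Y := [set i | y i].
have -> : [set i | x i != y i] = (X :\: Y) :|: (Y :\: X).
  by apply/setP => i; rewrite !inE; case: (x i); case: (y i).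
have disj : (X :\: Y) :&: (Y :\: X) = set0.
  by apply/setP => i; rewrite !inE; case: (x i); case: (y i).
rewrite cardsU disj cards0 subn0 !cardsD oddD !oddB ?subset_leq_card ?subsetIl // setIC.
by rewrite /weight -/X -/Y; case: (odd #|X|); case: (odd #|Y|); case: (odd _).
Qed.

Lemma cube_even_parity (x y : cube k) :
  ~~ odd (weight x) -> ~~ odd (weight y) = ~~ odd (hamming x y).
Proof. by rewrite hamming_parity => /negbTE ->. Qed.

Lemma weight_canon0 : weight (canon 0) = 0.
Proof. by rewrite weight_hamming hamming_refl. Qed.

End Cube.

Section Folded.
Variable k : nat.
Notation compl := (@cube_compl k).
Notation canon := (hamming_canon k false true).

Lemma fold_class_proof (x : cube k) : [exists y, [set x; compl x] == [set y; compl y]].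
Proof. by apply/existsP; exists x. Qed.

Definition fold_class (x : cube k) : folded_vtx k := exist _ [set x; compl x] (fold_class_proof x).

Lemma fold_classP (A : folded_vtx k) : exists x, A = fold_class x.
Proof. by case: A => B /[dup] /existsP[x /eqP->] B_cls; exists x; apply: val_inj. Qed.

Lemma fold_class_compl x : fold_class (compl x) = fold_class x.
Proof. by apply: val_inj; rewrite /= cube_complK setUC. Qed.

Lemma fold_class_inj x y : fold_class x = fold_class y -> y = x \/ y = compl x.
Proof.
move/(congr1 val) => /= xy; have : y \in [set x; compl x] by rewrite xy set21.
by rewrite !inE => /orP[] /eqP; [left | right].
Qed.

Definition fold_dist (x y : cube k) := minn (hamming x y) (k - hamming x y).

Lemma fold_dist_complr x y : fold_dist x (compl y) = fold_dist x y.
Proof. by rewrite /fold_dist hamming_complr; have := hamming_le x y; lia. Qed.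

Lemma fold_dist_compll x y : fold_dist (compl x) y = fold_dist x y.
Proof. by rewrite /fold_dist hamming_compl; have := hamming_le x y; lia. Qed.

Lemma fold_dist_triangle x y z : fold_dist x z <= fold_dist x y + fold_dist y z.
Proof.
have := hamming_triangle x y z; have := hamming_triangle x z y.
have := hamming_triangle y x z; have := hamming_triangle x (compl y) z.
rewrite /fold_dist hamming_complr hamming_compl !(hamming_sym z) (hamming_sym y x).
by have := hamming_le x y; have := hamming_le x z; have := hamming_le y z; lia.
Qed.

Lemma fold_dist_rep x y : exists2 x', fold_class x' = fold_class x & hamming x' y = fold_dist x y.
Proof.
have [le_h | lt_h] := leqP (hamming x y) (k - hamming x y).
  by exists x; rewrite // /fold_dist (minn_idPl le_h).
exists (compl x); rewrite ?fold_class_compl //.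
by rewrite hamming_compl /fold_dist minnC (minn_idPl (ltnW lt_h)).
Qed.

Definition fold_rep (A : folded_vtx k) : cube k := xchoose (existsP (valP A)).

Lemma fold_repK A : fold_class (fold_rep A) = A.
Proof. by apply: val_inj; apply/esym/eqP; exact: (xchooseP (existsP (valP A))). Qed.

Lemma fold_rep_class x : fold_rep (fold_class x) = x \/ fold_rep (fold_class x) = compl x.
Proof. by apply: fold_class_inj; rewrite fold_repK. Qed.

Definition folded_dist (A B : folded_vtx k) := fold_dist (fold_rep A) (fold_rep B).

Lemma folded_dist_class x y : folded_dist (fold_class x) (fold_class y) = fold_dist x y.
Proof.
rewrite /folded_dist; case: (fold_rep_class x) => ->; case: (fold_rep_class y) => ->;
  by rewrite ?fold_dist_complr ?fold_dist_compll.
Qed.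

Lemma folded_adj_class x y :
  folded_adj (fold_class x) (fold_class y) = (hamming x y == 1) || (hamming x (compl y) == 1).
Proof.
apply/idP/idP => [/existsP[u /andP[/= u_x /existsP[v /andP[/= v_y uv]]]] | /orP[] xy].
- move: u_x v_y uv; rewrite !inE => /orP[]/eqP-> /orP[]/eqP->; rewrite /cube_adj -/(hamming _ _).
  + by move=> ->.
  + by move=> ->; rewrite orbT.
  + by rewrite hamming_compl -hamming_complr => ->; rewrite orbT.
  + by rewrite hamming_compl2 => ->.
- by apply/existsP; exists x; rewrite /= set21; apply/existsP; exists y; rewrite /= set21.
- by apply/existsP; exists x; rewrite /= set21; apply/existsP; exists (compl y); rewrite /= set22.
Qed.

Lemma folded_metric : graph_metric (@folded_adj k) folded_dist.
Proof.
apply: graph_metric_descent => [A | A B | A B C | A B].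
- by have [x ->] := fold_classP A; rewrite folded_dist_class /fold_dist hamming_refl min0n.
- have [x ->] := fold_classP A; have [y ->] := fold_classP B; rewrite folded_dist_class => d0.
  have : hamming x y = 0 \/ hamming x (compl y) = 0.
    by move: d0; rewrite hamming_complr /fold_dist; have := hamming_le x y; lia.
  by case=> /hamming_eq0 ->; rewrite ?fold_class_compl.
- have [x ->] := fold_classP A; have [y ->] := fold_classP B; have [z ->] := fold_classP C.
  rewrite folded_adj_class !folded_dist_class => yz.
  apply: leq_trans (fold_dist_triangle x y z) _; rewrite -addn1 leq_add2l.
  by case/orP: yz => /eqP yz; [|rewrite -(fold_dist_complr y z)]; rewrite /fold_dist yz geq_minl.
- have [x ->] := fold_classP A; have [y ->] := fold_classP B; rewrite folded_dist_class => d_gt0.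
  have [x' <- x'y] := fold_dist_rep x y.
  have /(metric_between (@hamming_metric k bool)) [z [x'z zy]] : 1 <= hamming x' y by rewrite x'y.
  exists (fold_class z); first by rewrite folded_adj_class x'z.
  rewrite folded_dist_class; apply: leq_ltn_trans (geq_minl _ _) _.
  by rewrite zy x'y; lia.
Qed.

Section FoldedMonomial.
Variables (s : {perm 'I_k}) (t : 'I_k -> {perm bool}).

Definition folded_monomial_fun (A : folded_vtx k) := fold_class (monomial s t (fold_rep A)).

Lemma folded_monomial_fun_class x :
  folded_monomial_fun (fold_class x) = fold_class (monomial s t x).
Proof.
rewrite /folded_monomial_fun; case: (fold_rep_class x) => ->//.
by rewrite monomial_compl fold_class_compl.
Qed.

Lemma folded_monomial_fun_inj : injective folded_monomial_fun.
Proof.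
move=> A B; have [x ->] := fold_classP A; have [y ->] := fold_classP B.
rewrite !folded_monomial_fun_class => /fold_class_inj[/perm_inj -> //|].
by rewrite -monomial_compl => /perm_inj ->; rewrite fold_class_compl.
Qed.

Definition folded_monomial : {perm folded_vtx k} := perm folded_monomial_fun_inj.

Lemma folded_monomialE x : folded_monomial (fold_class x) = fold_class (monomial s t x).
Proof. by rewrite permE folded_monomial_fun_class. Qed.

Lemma folded_monomial_aut : is_aut (@folded_adj k) folded_monomial.
Proof.
move=> A B; have [x ->] := fold_classP A; have [y ->] := fold_classP B.
by rewrite !folded_monomialE !folded_adj_class -monomial_compl !hamming_monomial.
Qed.

End FoldedMonomial.

Lemma folded_canonical : canonical_geodesics (@folded_adj k) (fun i => fold_class (canon i)).
Proof.
split=> [A | l a _].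
  have [x ->] := fold_classP A; have [t tx] := monomial_to_canon0 false true x.
  by exists (folded_monomial 1 t); rewrite ?folded_monomialE ?tx //; apply: folded_monomial_aut.
have [w ->] := fold_classP a; rewrite folded_adj_class folded_metric => lw.
have [w' <- lw'] : exists2 w', fold_class w' = fold_class w & hamming (canon l) w' = 1.
  by case/orP: lw => /eqP lw; [exists w | exists (compl w); rewrite ?fold_class_compl].
rewrite folded_dist_class => /eqP dw'.
have lt_l : l < hamming (canon 0) w' by rewrite -ltnS -dw' ltnS geq_minl.
have [s [t [st_fix st_w']]] := hamming_extension (isT : false != true) lw' lt_l.
exists (folded_monomial s t); first exact: folded_monomial_aut.
by split=> [i le_il|]; rewrite folded_monomialE ?st_fix ?st_w'.
Qed.

End Folded.

Section HalvedFolded.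
Variable k : nat.
Hypothesis k_even : ~~ odd k.

Lemma odd_weight_compl (x : cube k) : odd (weight (cube_compl x)) = odd (weight x).
Proof.
by rewrite !weight_hamming hamming_complr oddB ?hamming_le // (negbTE k_even).
Qed.

Lemma even_fold_class x :
  [exists y in val (fold_class x), ~~ odd (@weight k y)] = ~~ odd (weight x).
Proof.
apply/existsP/idP => [[y /andP[]] | x_even]; last by exists x; rewrite /= set21.
by rewrite !inE => /orP[] /eqP ->; rewrite ?odd_weight_compl.
Qed.

Lemma folded_even_parity (A B : folded_vtx k) :
  [exists x in val A, ~~ odd (@weight k x)] ->
  [exists x in val B, ~~ odd (@weight k x)] = ~~ odd (folded_dist A B).
Proof.
have [x ->] := fold_classP A; have [y ->] := fold_classP B.
rewrite !even_fold_class folded_dist_class => x_even.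
have -> : odd (fold_dist x y) = odd (hamming x y).
  rewrite /fold_dist; case: leqP => _ //.
  by rewrite oddB ?hamming_le // (negbTE k_even).
by rewrite hamming_parity (negbTE x_even).
Qed.

End HalvedFolded.

Theorem proposition3p7 :
  (forall k m : nat, 2 <= m -> geodesic_transitive (@hamming_adj k m)) /\
  (forall k : nat, geodesic_transitive (@halved_cube_adj k)) /\
  (forall k : nat, geodesic_transitive (@folded_adj k)) /\
  (forall k : nat, ~~ odd k ->
     geodesic_transitive (@halved_folded_adj k)).
Proof.
split; [|split; [|split]].
- move=> k [|[|m]] // _.
  have a01 : ord0 != ord_max :> 'I_m.+2 by [].
  exact (geodesic_transitive_canonical (@hamming_metric k _) (hamming_canonical k a01)).
- move=> k; apply: halved_geodesic_transitive (@hamming_metric k bool)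
                                              (hamming_canonical k (isT : false != true)) _ _.
  + exact: cube_even_parity.
  + by rewrite weight_canon0.
- move=> k; exact: geodesic_transitive_canonical (@folded_metric k) (@folded_canonical k).
- move=> k k_even.
  apply: halved_geodesic_transitive (@folded_metric k) (@folded_canonical k) _ _.
  + exact: folded_even_parity.
  + by rewrite (even_fold_class k_even) weight_canon0.
Qed.
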